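(* Let $\alpha>0$ and $\lambda\in\mathbb C$ with $\operatorname{Re}\lambda>-1$ and $\lambda\notin\{0,1\}$. Then the hypergeometric equation $$z(1-z)\psi''+\big((\lambda-\sqrt{1+\alpha})-2\lambda z\big)\psi'-\lambda(\lambda-1)\psi=0$$ has no nontrivial solution $\psi\in C^\infty[0,1]$ (equivalently, with $y'=2z-1$, the equation $(\lambda^2-\lambda)\psi+(2\lambda y'+2\sqrt{1+\alpha})\psi'+(y'^2-1)\psi''=0$ has no nontrivial solution in $C^\infty[-1,1]$). As a consequence, the equation $$(\lambda^2+\lambda)\varphi+\Big((2\lambda+2)y+\frac{2\alpha}{\sqrt{1+\alpha}+y}\Big)\varphi'+(y^2-1)\varphi''=0$$ has no nontrivial solution $\varphi\in C^\infty[-1,1]$ when $\operatorname{Re}\lambda>-1$ and $\lambda\notin\{0,1\}$. *)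

From Stdlib Require Import Reals.
From Coquelicot Require Import Coquelicot.
Open Scope R_scope.

Definition deriv_within (a b : R) (f g : R -> C) : Prop :=
  forall x, a <= x <= b ->
    forall eps, 0 < eps -> exists delta, 0 < delta /\
      forall h, h <> 0 -> a <= x + h <= b -> Rabs h < delta ->
        Cmod (Cminus (Cdiv (Cminus (f (x + h)) (f x)) (RtoC h)) (g x)) < eps.

Definition deriv_tower (a b : R) (D : nat -> R -> C) : Prop :=
  forall n, deriv_within a b (D n) (D (S n)).

Definition smooth_on_with (a b : R) (f : R -> C) (D : nat -> R -> C) : Prop :=
  (forall x, a <= x <= b -> D O x = f x) /\ deriv_tower a b D.

From Stdlib Require Import Reals Lra Lia Psatz List.
From Coquelicot Require Import Coquelicot.
Import ListNotations.
Open Scope R_scope.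

(* Write the middle equation as L_lam u = (lam^2 - lam) u + (2 lam y + 2 s) u' + (y^2 - 1) u'' = 0.
   Differentiating it shows that u^(n) solves L_(lam + n) = 0.  For n large the
   weighted norm (1 - y^2) |u^(n)|^2, which vanishes at +-1, cannot have a
   positive interior maximum (its second derivative is positive at every
   critical point), so u^(n) = 0; since (lam + j)(lam + j - 1) <> 0 for all j,
   the equation then gives u^(j) = 0 by descending induction.  The
   hypergeometric form is the affine change z = (y + 1)/2.  If phi solves the
   last equation, then (s - Y)^(-lam) phi((s Y - 1)/(s - Y)) solves L_lam = 0,
   where s = sqrt(1 + alpha). *)

Lemma C_eq_components (x y : C) : fst x = fst y -> snd x = snd y -> x = y.
Proof. destruct x, y; simpl; intros; subst; reflexivity. Qed.

Ltac unfold_C := unfold Cminus, Cplus, Cmult, Copp, RtoC, Cdiv, Cinv, Cconj in *; simpl in *.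

Lemma RtoC_neq0 (h : R) : h <> 0 -> RtoC h <> RtoC 0.
Proof. intros H E. apply H. injection E; auto. Qed.

Lemma Cmult_eq0_r (a b : C) : a <> RtoC 0 -> (a * b)%C = RtoC 0 -> b = RtoC 0.
Proof.
  intros Ha E. apply Cmod_eq_0. apply (f_equal Cmod) in E. rewrite Cmod_mult, Cmod_0 in E.
  apply Cmod_gt_0 in Ha. generalize (Cmod_ge_0 b). nra.
Qed.

Definition lim0 (P : R -> Prop) (F : R -> C) (L : C) :=
  forall eps, 0 < eps -> exists d, 0 < d /\
    forall h, P h -> Rabs h < d -> Cmod (F h - L)%C < eps.

Section Lim0.
Variable P : R -> Prop.

Lemma lim0_ext F G L : (forall h, P h -> F h = G h) -> lim0 P F L -> lim0 P G L.
Proof.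
  intros E H eps He. destruct (H eps He) as [d [Hd H']]. exists d; split; auto.
  intros h Ph Hh. rewrite <- E; auto.
Qed.

Lemma lim0_const c : lim0 P (fun _ => c) c.
Proof.
  intros eps He. exists 1; split; [lra|]. intros.
  replace (c - c)%C with (RtoC 0) by ring. rewrite Cmod_0; auto.
Qed.

Lemma lim0_plus F G a b :
  lim0 P F a -> lim0 P G b -> lim0 P (fun h => F h + G h)%C (a + b)%C.
Proof.
  intros HF HG eps He.
  destruct (HF (eps/2)) as [d1 [Hd1 H1]]; [lra|].
  destruct (HG (eps/2)) as [d2 [Hd2 H2]]; [lra|].
  exists (Rmin d1 d2); split; [apply Rmin_glb_lt; auto|].
  intros h Ph Hh. apply Rmin_Rgt in Hh as [Hh1 Hh2].
  replace (F h + G h - (a + b))%C with ((F h - a) + (G h - b))%C by ring.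
  eapply Rle_lt_trans; [apply Cmod_triangle|].
  specialize (H1 h Ph Hh1). specialize (H2 h Ph Hh2). lra.
Qed.

Lemma lim0_mult F G a b :
  lim0 P F a -> lim0 P G b -> lim0 P (fun h => F h * G h)%C (a * b)%C.
Proof.
  intros HF HG eps He.
  set (K := 2 + Cmod a + Cmod b).
  assert (HK : 0 < K) by (unfold K; generalize (Cmod_ge_0 a) (Cmod_ge_0 b); lra).
  set (e := Rmin 1 (eps / K)).
  assert (He0 : 0 < e) by (apply Rmin_glb_lt; [lra | apply Rdiv_lt_0_compat; auto]).
  assert (He1 : e <= 1) by apply Rmin_l.
  assert (HeK : e * K <= eps).
  { assert (e <= eps / K) by apply Rmin_r.
    apply Rmult_le_compat_r with (r := K) in H; [|lra].
    unfold Rdiv in H. rewrite Rmult_assoc, Rinv_l in H; lra. }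
  destruct (HF e He0) as [d1 [Hd1 H1]]. destruct (HG e He0) as [d2 [Hd2 H2]].
  exists (Rmin d1 d2); split; [apply Rmin_glb_lt; auto|].
  intros h Ph Hh. apply Rmin_Rgt in Hh as [Hh1 Hh2].
  specialize (H1 h Ph Hh1). specialize (H2 h Ph Hh2).
  replace (F h * G h - a * b)%C with ((F h - a) * ((G h - b) + b) + a * (G h - b))%C by ring.
  eapply Rle_lt_trans; [apply Cmod_triangle|]. rewrite !Cmod_mult.
  assert (Cmod (G h - b + b)%C <= e + Cmod b).
  { eapply Rle_trans; [apply Cmod_triangle|]. lra. }
  generalize (Cmod_ge_0 (F h - a)%C) (Cmod_ge_0 a) (Cmod_ge_0 (G h - b)%C) (Cmod_ge_0 b)
    (Cmod_ge_0 (G h - b + b)%C); intros.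
  assert (Cmod (F h - a)%C * Cmod (G h - b + b)%C <= e * (e + Cmod b))
    by (apply Rmult_le_compat; lra).
  assert (Cmod a * Cmod (G h - b)%C <= Cmod a * e) by (apply Rmult_le_compat_l; lra).
  unfold K in HeK. nra.
Qed.

Lemma lim0_Cconj F L : lim0 P F L -> lim0 P (fun h => Cconj (F h)) (Cconj L).
Proof.
  intros H eps He. destruct (H eps He) as [d [Hd H']]. exists d; split; auto.
  intros h Ph Hh. rewrite <- Cminus_conj, Cmod_conj. auto.
Qed.

Lemma lim0_RtoC f l :
  (forall eps, 0 < eps -> exists d, 0 < d /\
     forall h, P h -> Rabs h < d -> Rabs (f h - l) < eps) ->
  lim0 P (fun h => RtoC (f h)) (RtoC l).
Proof.
  intros H eps He. destruct (H eps He) as [d [Hd H']]. exists d; split; auto.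
  intros. rewrite <- RtoC_minus, Cmod_R; auto.
Qed.

End Lim0.

Lemma lim0_comp P Q F K L :
  lim0 P F L -> (forall h, Q h -> P (K h)) ->
  (forall e, 0 < e -> exists d, 0 < d /\ forall h, Q h -> Rabs h < d -> Rabs (K h) < e) ->
  lim0 Q (fun h => F (K h)) L.
Proof.
  intros HF HPQ HK eps He. destruct (HF eps He) as [d [Hd H]].
  destruct (HK d Hd) as [d' [Hd' H']]. exists d'; split; auto.
Qed.

(** * Derivatives within a closed interval *)

Definition increment_dom (a b x h : R) : Prop := h <> 0 /\ a <= x + h <= b.

Definition diff_quot (f : R -> C) (x h : R) : C := ((f (x + h)%R - f x) / h)%C.

Lemma lim0_increment_unique a b x F L c : a < b -> a <= x <= b ->
  lim0 (increment_dom a b x) F L ->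
  (forall h, h <> 0 -> a < x + h < b -> F h = c) -> L = c.
Proof.
  intros Hab Hx H Hc. replace L with ((L - c) + c)%C by ring.
  replace (L - c)%C with (RtoC 0); [ring|]. symmetry. apply Cmod_eq_0.
  apply Rle_antisym; [|apply Cmod_ge_0]. apply Rnot_lt_le. intro Hp.
  destruct (H _ Hp) as [d [Hd H']].
  set (k := Rmin (d/2) ((b - a)/4)).
  assert (Hk : 0 < k) by (apply Rmin_glb_lt; lra).
  assert (Hkd : k <= d/2) by apply Rmin_l. assert (Hkb : k <= (b - a)/4) by apply Rmin_r.
  assert (Hgap : exists h, h <> 0 /\ a < x + h < b /\ Rabs h < d).
  { destruct (Rle_lt_dec x ((a + b)/2)).
    - exists k. rewrite Rabs_right by lra. repeat split; lra.
    - exists (-k). rewrite Rabs_left by lra. repeat split; lra. }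
  destruct Hgap as [h [Hh0 [Hhin Hhd]]].
  assert (Hlt := H' h (conj Hh0 (conj (Rlt_le _ _ (proj1 Hhin)) (Rlt_le _ _ (proj2 Hhin)))) Hhd).
  rewrite Hc in Hlt by auto.
  replace (c - L)%C with (- (L - c))%C in Hlt by ring. rewrite Cmod_opp in Hlt. lra.
Qed.

Lemma lim0_continuity_pt a b (f : R -> R) x : continuity_pt f x ->
  lim0 (increment_dom a b x) (fun h => RtoC (f (x + h))) (RtoC (f x)).
Proof.
  intros Hf. apply lim0_RtoC. intros eps He.
  destruct (Hf eps He) as [d [Hd H]]. exists d; split; auto.
  intros h [Hh _] Hhd. apply (H (x + h)). simpl. unfold R_dist, D_x, no_cond.
  replace (x + h - x) with h by ring. repeat split; auto. lra.
Qed.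

Lemma deriv_within_lim0 a b f g : deriv_within a b f g <->
  forall x, a <= x <= b -> lim0 (increment_dom a b x) (diff_quot f x) (g x).
Proof.
  split.
  - intros H x Hx eps He. destruct (H x Hx eps He) as [d [Hd H']]. exists d; split; auto.
    intros h [Hh1 Hh2] Hh. apply H'; auto.
  - intros H x Hx eps He. destruct (H x Hx eps He) as [d [Hd H']]. exists d; split; auto.
    intros h Hh1 Hh2 Hh. apply (H' h); auto. split; auto.
Qed.

Section DerivWithin.
Variables a b : R.

Lemma deriv_within_continuous f g x : deriv_within a b f g -> a <= x <= b ->
  lim0 (increment_dom a b x) (fun h => f (x + h)) (f x).
Proof.
  rewrite deriv_within_lim0. intros H Hx.
  assert (L : lim0 (increment_dom a b x) (fun h => diff_quot f x h * h + f x)%C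
                (g x * 0 + f x)%C).
  { apply lim0_plus; [apply lim0_mult; auto | apply lim0_const].
    apply lim0_RtoC. intros eps He. exists eps; split; auto.
    intros. rewrite Rminus_0_r; auto. }
  replace (g x * 0 + f x)%C with (f x) in L by ring.
  eapply lim0_ext; [|apply L]. intros h [Hh _]. unfold diff_quot. field. apply RtoC_neq0; auto.
Qed.

Lemma deriv_within_ext f1 f2 g1 g2 :
  (forall x, a <= x <= b -> f1 x = f2 x) -> (forall x, a <= x <= b -> g1 x = g2 x) ->
  deriv_within a b f1 g1 -> deriv_within a b f2 g2.
Proof.
  rewrite !deriv_within_lim0. intros Ef Eg H x Hx. rewrite <- Eg; auto.
  eapply lim0_ext; [|apply H; auto]. intros h [Hh Hh2]. unfold diff_quot. rewrite !Ef; auto.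
Qed.

Lemma deriv_within_const c : deriv_within a b (fun _ => c) (fun _ => RtoC 0).
Proof.
  rewrite deriv_within_lim0. intros x Hx. eapply lim0_ext; [|apply lim0_const].
  intros h [Hh _]. unfold diff_quot. field. apply RtoC_neq0; auto.
Qed.

Lemma deriv_within_id : deriv_within a b (fun x => RtoC x) (fun _ => RtoC 1).
Proof.
  rewrite deriv_within_lim0. intros x Hx. eapply lim0_ext; [|apply lim0_const].
  intros h [Hh _]. unfold diff_quot. apply C_eq_components; unfold_C; field; auto.
Qed.

Lemma deriv_within_plus f1 g1 f2 g2 : deriv_within a b f1 g1 -> deriv_within a b f2 g2 ->
  deriv_within a b (fun x => f1 x + f2 x)%C (fun x => g1 x + g2 x)%C.
Proof.
  rewrite !deriv_within_lim0. intros H1 H2 x Hx.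
  eapply lim0_ext; [|apply lim0_plus; [apply H1 | apply H2]; auto].
  intros h [Hh _]. unfold diff_quot. field. apply RtoC_neq0; auto.
Qed.

Lemma deriv_within_mult f1 g1 f2 g2 : deriv_within a b f1 g1 -> deriv_within a b f2 g2 ->
  deriv_within a b (fun x => f1 x * f2 x)%C (fun x => g1 x * f2 x + f1 x * g2 x)%C.
Proof.
  intros H1 H2. assert (C2 := fun x => deriv_within_continuous _ _ x H2).
  rewrite deriv_within_lim0 in *. intros x Hx.
  eapply lim0_ext; [|apply lim0_plus;
    [apply lim0_mult; [apply H1; auto | apply C2; auto]
    | apply lim0_mult; [apply lim0_const | apply H2; auto]]].
  intros h [Hh _]. unfold diff_quot. field. apply RtoC_neq0; auto.
Qed.

Lemma deriv_within_scal c f g : deriv_within a b f g ->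
  deriv_within a b (fun x => c * f x)%C (fun x => c * g x)%C.
Proof.
  intros H. eapply deriv_within_ext; [| | apply (deriv_within_mult _ _ _ _ (deriv_within_const c) H)];
  intros; simpl; ring.
Qed.

Lemma deriv_within_of_components (f g : R -> C) :
  (forall x, a <= x <= b ->
     is_derive (fun t => fst (f t)) x (fst (g x)) /\ is_derive (fun t => snd (f t)) x (snd (g x))) ->
  deriv_within a b f g.
Proof.
  intros H x Hx eps He. destruct (H x Hx) as [H1 H2].
  apply is_derive_Reals in H1. apply is_derive_Reals in H2.
  destruct (H1 (eps/2)) as [d1 Hd1]; [lra|]. destruct (H2 (eps/2)) as [d2 Hd2]; [lra|].
  exists (Rmin d1 d2). split; [apply Rmin_glb_lt; apply cond_pos|].
  intros h Hh Hxh Hhd. apply Rmin_Rgt in Hhd as [Hh1 Hh2].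
  specialize (Hd1 h Hh Hh1). specialize (Hd2 h Hh Hh2).
  assert (Eq : (diff_quot f x h - g x)%C =
    ((fst (f (x + h)) - fst (f x)) / h - fst (g x), (snd (f (x + h)) - snd (f x)) / h - snd (g x))).
  { unfold diff_quot. apply C_eq_components; unfold_C; field; auto. }
  change (Cmod (diff_quot f x h - g x)%C < eps). rewrite Eq.
  eapply Rle_lt_trans; [apply Cmod_2Rmax|]. simpl.
  assert (Hs : sqrt 2 < 2).
  { rewrite <- (sqrt_square 2) at 2 by lra. apply sqrt_lt_1_alt. lra. }
  assert (Hm : Rmax (Rabs ((fst (f (x + h)) - fst (f x)) / h - fst (g x)))
                    (Rabs ((snd (f (x + h)) - snd (f x)) / h - snd (g x))) < eps / 2)
    by (apply Rmax_lub_lt; assumption).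
  generalize (Rmax_l (Rabs ((fst (f (x + h)) - fst (f x)) / h - fst (g x)))
                     (Rabs ((snd (f (x + h)) - snd (f x)) / h - snd (g x)))).
  generalize (Rabs_pos ((fst (f (x + h)) - fst (f x)) / h - fst (g x))). nra.
Qed.

Lemma deriv_within_components (f g : R -> C) x : deriv_within a b f g -> a < x < b ->
  is_derive (fun t => fst (f t)) x (fst (g x)) /\ is_derive (fun t => snd (f t)) x (snd (g x)).
Proof.
  intros H Hx.
  assert (Hlim : forall eps, 0 < eps -> exists d : posreal, forall h, h <> 0 -> Rabs h < d ->
            Cmod (diff_quot f x h - g x)%C < eps).
  { intros eps He. destruct (H x (conj (Rlt_le _ _ (proj1 Hx)) (Rlt_le _ _ (proj2 Hx))) eps He)
      as [d [Hd H']].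
    assert (Hp : 0 < Rmin d (Rmin (x - a) (b - x))) by (repeat apply Rmin_glb_lt; lra).
    exists (mkposreal _ Hp). simpl. intros h Hh Hhd.
    apply Rmin_Rgt in Hhd as [Hhd Hhab]. apply Rmin_Rgt in Hhab as [Hha Hhb].
    apply H'; auto. apply Rabs_def2 in Hha. apply Rabs_def2 in Hhb. lra. }
  assert (Eq : forall h, h <> 0 -> (diff_quot f x h - g x)%C =
    ((fst (f (x + h)) - fst (f x)) / h - fst (g x), (snd (f (x + h)) - snd (f x)) / h - snd (g x))).
  { intros h Hh. unfold diff_quot. apply C_eq_components; unfold_C; field; auto. }
  split; apply is_derive_Reals; intros eps He; destruct (Hlim eps He) as [d Hd];
    exists d; intros h Hh Hhd; specialize (Hd h Hh Hhd); rewrite Eq in Hd by auto.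
  - eapply Rle_lt_trans; [|apply Hd]. apply (re_le_Cmod (_, _)).
  - eapply Rle_lt_trans; [|apply Hd]. eapply Rle_trans; [apply Rmax_r | apply (Rmax_Cmod (_, _))].
Qed.

Lemma deriv_within_RtoC (r r' : R -> R) : (forall x, a <= x <= b -> is_derive r x (r' x)) ->
  deriv_within a b (fun x => RtoC (r x)) (fun x => RtoC (r' x)).
Proof.
  intros H. apply deriv_within_of_components. intros x Hx. split.
  - exact (H x Hx).
  - exact (is_derive_const 0 x).
Qed.

Lemma deriv_within_comp c d (f f' : R -> C) (r r' : R -> R) :
  deriv_within c d f f' ->
  (forall x, a <= x <= b -> is_derive r x (r' x)) ->
  (forall x, a <= x <= b -> c <= r x <= d) ->
  (forall x y, a <= x <= b -> a <= y <= b -> r x = r y -> x = y) ->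
  deriv_within a b (fun x => f (r x)) (fun x => f' (r x) * r' x)%C.
Proof.
  intros Hf Hr Hrange Hinj. rewrite deriv_within_lim0 in *. intros x Hx.
  assert (Hd := Hr x Hx). apply is_derive_Reals in Hd.
  assert (Hr0 : forall h, increment_dom a b x h -> r (x + h) - r x <> 0).
  { intros h [Hh Hin] E. apply Hh. assert (x + h = x); [apply Hinj; auto; lra | lra]. }
  assert (Lr : lim0 (increment_dom a b x) (fun h => RtoC ((r (x + h) - r x) / h)) (RtoC (r' x))).
  { apply lim0_RtoC. intros eps He. destruct (Hd eps He) as [dd Hdd].
    exists dd; split; [apply cond_pos|]. intros h [Hh _] Hhd. apply Hdd; auto. }
  assert (Lf : lim0 (increment_dom a b x) (fun h => diff_quot f (r x) (r (x + h) - r x)) (f' (r x))).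
  { apply lim0_comp with (P := increment_dom c d (r x)); [apply Hf; auto| |].
    - intros h Hh. split; [apply Hr0; auto|].
      replace (r x + (r (x + h) - r x)) with (r (x + h)) by ring. apply Hrange, Hh.
    - intros e He. destruct (Hd 1 Rlt_0_1) as [dd Hdd].
      set (M := Rabs (r' x) + 1).
      assert (HM : 0 < M) by (unfold M; generalize (Rabs_pos (r' x)); lra).
      exists (Rmin dd (e / M)).
      split; [apply Rmin_glb_lt; [apply cond_pos | apply Rdiv_lt_0_compat; auto]|].
      intros h [Hh _] Hhd. apply Rmin_Rgt in Hhd as [Hh1 Hh2].
      specialize (Hdd h Hh Hh1).
      replace (r (x + h) - r x) with (((r (x + h) - r x) / h) * h) by (field; auto).
      rewrite Rabs_mult.
      assert (Rabs ((r (x + h) - r x) / h) <= M).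
      { unfold M. replace ((r (x + h) - r x) / h) with (((r (x + h) - r x) / h - r' x) + r' x) by ring.
        eapply Rle_trans; [apply Rabs_triang|]. lra. }
      apply Rmult_lt_compat_r with (r := M) in Hh2; auto.
      unfold Rdiv in Hh2. rewrite Rmult_assoc, Rinv_l, Rmult_1_r in Hh2 by lra.
      generalize (Rabs_pos h) (Rabs_pos ((r (x + h) - r x) / h)). nra. }
  eapply lim0_ext; [|apply (lim0_mult _ _ _ _ _ Lf Lr)].
  intros h Hh. specialize (Hr0 h Hh). destruct Hh as [Hh _]. unfold diff_quot.
  replace (r x + (r (x + h) - r x)) with (r (x + h)) by ring.
  apply C_eq_components; unfold_C; field; auto.
Qed.

Lemma deriv_within_zero f g : a < b -> deriv_within a b f g ->
  (forall x, a <= x <= b -> f x = RtoC 0) -> forall x, a <= x <= b -> g x = RtoC 0.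
Proof.
  rewrite deriv_within_lim0. intros Hab H Hf x Hx.
  apply (lim0_increment_unique a b x (diff_quot f x)); auto.
  intros h Hh Hin. unfold diff_quot. rewrite !Hf by lra.
  field. apply RtoC_neq0; auto.
Qed.

Lemma deriv_within_vanish_closed f g : a < b -> deriv_within a b f g ->
  (forall x, a < x < b -> f x = RtoC 0) -> forall x, a <= x <= b -> f x = RtoC 0.
Proof.
  intros Hab H Hf x Hx.
  apply (lim0_increment_unique a b x (fun h => f (x + h))); auto.
  apply deriv_within_continuous with g; auto.
Qed.
End DerivWithin.

Lemma is_derive_Rmult (f g : R -> R) (x a b : R) : is_derive f x a -> is_derive g x b ->
  is_derive (fun t => f t * g t) x (a * g x + f x * b).
Proof. intros Hf Hg. exact (is_derive_mult f g x a b Hf Hg Rmult_comm). Qed.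

Lemma is_derive_eq (f : R -> R) x l l' : is_derive f x l -> l = l' -> is_derive f x l'.
Proof. intros H E. subst. exact H. Qed.

Definition clamp (a b x : R) : R := Rmax a (Rmin b x).

Lemma clamp_in a b x : a <= b -> a <= clamp a b x <= b.
Proof. intros. unfold clamp, Rmax, Rmin. repeat destruct Rle_dec; lra. Qed.

Lemma clamp_id a b x : a <= x <= b -> clamp a b x = x.
Proof. intros. unfold clamp, Rmax, Rmin. repeat destruct Rle_dec; lra. Qed.

Lemma clamp_lipschitz a b x y : a <= b -> Rabs (clamp a b y - clamp a b x) <= Rabs (y - x).
Proof.
  intros. unfold clamp, Rmax, Rmin, Rabs. repeat destruct Rle_dec; repeat destruct Rcase_abs; lra.
Qed.

(* [g \o clamp a b] is continuous on all of [R], so Stdlib's extreme value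
   theorem applies to it. *)
Lemma continuous_within_attains_max (a b : R) (g : R -> R) : a <= b ->
  (forall x, a <= x <= b ->
     lim0 (increment_dom a b x) (fun h => RtoC (g (x + h))) (RtoC (g x))) ->
  exists M, a <= M <= b /\ forall t, a <= t <= b -> g t <= g M.
Proof.
  intros Hab Hg.
  assert (Hc : forall x, continuity_pt (fun t => g (clamp a b t)) x).
  { intros x eps He. set (c := clamp a b x).
    destruct (Hg c (clamp_in a b x Hab) eps He) as [d [Hd H]].
    exists d. split; auto. intros y [_ Hy]. simpl in *. unfold R_dist in *.
    destruct (Req_dec (clamp a b y) c) as [E|E].
    { rewrite E, Rminus_diag, Rabs_R0. auto. }
    specialize (H (clamp a b y - c)).
    replace (c + (clamp a b y - c)) with (clamp a b y) in H by ring.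
    rewrite <- RtoC_minus, Cmod_R in H. apply H.
    - split; [lra|]. replace (c + (clamp a b y - c)) with (clamp a b y) by ring.
      apply clamp_in; auto.
    - eapply Rle_lt_trans; [apply clamp_lipschitz; auto | auto]. }
  destruct (continuity_ab_maj (fun t => g (clamp a b t)) a b Hab (fun c _ => Hc c)) as [M [HM HMin]].
  exists M. split; auto. intros t Ht. specialize (HM t Ht). rewrite !clamp_id in HM; auto.
Qed.

Lemma exists_gt_right_of_pos_second_deriv (G G' : R -> R) a b y0 G'' :
  a < y0 < b -> (forall t, a < t < b -> is_derive G t (G' t)) ->
  G' y0 = 0 -> is_derive G' y0 G'' -> 0 < G'' -> exists t, y0 < t < b /\ G y0 < G t.
Proof.
  intros Hy HG H0 HH Hh2. apply is_derive_Reals in HH.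
  destruct (HH (G''/2)) as [d Hd]; [lra|].
  assert (Hpos : forall k, 0 < k < d -> 0 < G' (y0 + k)).
  { intros k Hk. specialize (Hd k). rewrite H0 in Hd.
    assert (Hq : Rabs ((G' (y0 + k) - 0) / k - G'') < G''/2)
      by (apply Hd; [lra | rewrite Rabs_right; lra]).
    apply Rabs_def2 in Hq as [_ Hq].
    replace (G' (y0 + k)) with (((G' (y0 + k) - 0) / k) * k) by (field; lra).
    apply Rmult_lt_0_compat; lra. }
  set (k := Rmin (d/2) ((b - y0)/2)).
  assert (Hk : 0 < k) by (apply Rmin_glb_lt; [generalize (cond_pos d)|]; lra).
  assert (Hk1 : k <= d/2) by apply Rmin_l. assert (Hk2 : k <= (b - y0)/2) by apply Rmin_r.
  destruct (MVT_cor2 G G' y0 (y0 + k)) as [c [Hc1 Hc2]]; [lra| |].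
  { intros c Hc. apply is_derive_Reals. apply HG. lra. }
  exists (y0 + k). split; [lra|].
  assert (0 < G' c) by (replace c with (y0 + (c - y0)) by ring; apply Hpos; generalize (cond_pos d); lra).
  assert (0 < G' c * (y0 + k - y0)) by (apply Rmult_lt_0_compat; lra). lra.
Qed.

(** * A maximum principle *)

(* Here [u = p + i q] with derivatives [p1, p2, q1, q2] and [mu = m + i b];
   [p2, q2] are eliminated through the two components of the equation, and
   the conclusion [0 < h2] rests on the identity
   [F W h2 = 2 (W t - b y F)^2 + 2 F^2 ((A - 1) W + y^2 (2 m - 3 - b^2) + 2 s y)]
   where [F = p^2 + q^2], [W = 1 - y^2], [t = p q1 - q p1], [A = m^2 - m - b^2]. *)
Lemma critical_weighted_norm_convex (y p q p1 q1 p2 q2 m b s : R) :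
  -1 < y < 1 -> 2 <= m -> 0 < 2*m - 3 - b^2 - 2*Rabs s ->
  (m*m - b*b - m)*p - (m*b + b*m - b)*q + (2*m*y + 2*s)*p1 - 2*b*y*q1 + (y^2-1)*p2 = 0 ->
  (m*m - b*b - m)*q + (m*b + b*m - b)*p + (2*m*y + 2*s)*q1 + 2*b*y*p1 + (y^2-1)*q2 = 0 ->
  -2*y*(p^2 + q^2) + (1 - y^2)*(2*(p*p1 + q*q1)) = 0 ->
  0 < p^2 + q^2 ->
  0 < -2*(p^2 + q^2) - 4*y*(2*(p*p1 + q*q1)) + (1 - y^2)*(2*(p1^2 + q1^2 + p*p2 + q*q2)).
Proof.
  intros Hy Hm Hk ERe EIm Hcrit HF.
  set (F := p^2 + q^2) in *. set (a := p*p1 + q*q1) in *. set (t := p*q1 - q*p1).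
  set (R2 := p*p2 + q*q2). set (W := 1 - y^2). set (A := m*m - m - b*b).
  assert (HW : 0 < W) by (unfold W; nra).
  assert (E1 : W*R2 = (2*m*y + 2*s)*a - 2*b*y*t + A*F).
  { assert (Z : p*((m*m - b*b - m)*p - (m*b + b*m - b)*q + (2*m*y + 2*s)*p1 - 2*b*y*q1 + (y^2-1)*p2)
              + q*((m*m - b*b - m)*q + (m*b + b*m - b)*p + (2*m*y + 2*s)*q1 + 2*b*y*p1 + (y^2-1)*q2) = 0)
      by (rewrite ERe, EIm; ring).
    unfold W, R2, a, t, A, F. lra. }
  assert (E2 : F*(p1^2 + q1^2) = a^2 + t^2) by (unfold F, a, t; ring).
  assert (E3 : W*a = y*F) by (unfold W; lra).
  assert (Hf : 0 < (A - 1)*W + y^2*(2*m - 3 - b^2) + 2*s*y).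
  { assert (A - 1 >= 2*m - 3 - b^2) by (unfold A; nra).
    assert (2*s*y >= - 2*Rabs s).
    { destruct (Rcase_abs s); [rewrite Rabs_left by auto | rewrite Rabs_right by auto]; nra. }
    assert (W + y^2 = 1) by (unfold W; ring). nra. }
  set (h2 := -2*F - 4*y*(2*a) + W*(2*(p1^2 + q1^2 + R2))).
  assert (Key : F*W*h2 = 2*(W*t - b*y*F)^2 + 2*F^2*((A - 1)*W + y^2*(2*m - 3 - b^2) + 2*s*y)).
  { unfold h2.
    replace (F*W*(-2*F - 4*y*(2*a) + W*(2*(p1^2 + q1^2 + R2)))) with
      (-2*W*F^2 - 8*y*F*(W*a) + 2*W^2*(F*(p1^2 + q1^2)) + 2*W*F*(W*R2)) by ring.
    rewrite E2, E1.
    replace (2*W^2*(a^2 + t^2)) with (2*(W*a)^2 + 2*W^2*t^2) by ring.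
    replace (2*W*F*((2*m*y + 2*s)*a - 2*b*y*t + A*F)) with
      (2*F*((2*m*y + 2*s)*(W*a)) - 4*b*y*t*W*F + 2*W*A*F^2) by ring.
    rewrite E3. ring. }
  assert (HFWh : 0 < F*W*h2).
  { rewrite Key. assert (0 < F^2) by nra.
    assert (0 < F^2*((A - 1)*W + y^2*(2*m - 3 - b^2) + 2*s*y)) by (apply Rmult_lt_0_compat; auto).
    assert (0 <= (W*t - b*y*F)^2) by apply pow2_ge_0. lra. }
  assert (0 < h2).
  { destruct (Rlt_or_le 0 h2); auto. assert (0 < F*W) by nra. nra. }
  unfold h2, R2 in *. lra.
Qed.

Definition ode_lhs (s : R) (mu : C) (u0 u1 u2 : C) (y : R) : C :=
  ((mu * mu - mu) * u0 + (2 * (mu * y) + RtoC (2 * s)) * u1 + RtoC (y ^ 2 - 1)%R * u2)%C.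

Section MaximumPrinciple.
Variables (u u1 u2 : R -> C).
Hypotheses (Hu : deriv_within (-1) 1 u u1) (Hu1 : deriv_within (-1) 1 u1 u2).

Definition wnorm (t : R) : R := (1 - t ^ 2) * (fst (u t) ^ 2 + snd (u t) ^ 2).

Definition wnorm' (t : R) : R :=
  -2 * t * (fst (u t) ^ 2 + snd (u t) ^ 2)
  + (1 - t ^ 2) * (2 * (fst (u t) * fst (u1 t) + snd (u t) * snd (u1 t))).

Definition wnorm'' (t : R) : R :=
  -2 * (fst (u t) ^ 2 + snd (u t) ^ 2) - 4 * t * (2 * (fst (u t) * fst (u1 t) + snd (u t) * snd (u1 t)))
  + (1 - t ^ 2) * (2 * (fst (u1 t) ^ 2 + snd (u1 t) ^ 2 + fst (u t) * fst (u2 t) + snd (u t) * snd (u2 t))).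

Lemma wnorm_continuous x : -1 <= x <= 1 ->
  lim0 (increment_dom (-1) 1 x) (fun h => RtoC (wnorm (x + h))) (RtoC (wnorm x)).
Proof.
  intros Hx.
  assert (E : forall t, RtoC (wnorm t) = (RtoC (1 - t ^ 2) * (u t * Cconj (u t)))%C)
    by (intros t; apply C_eq_components; unfold wnorm; unfold_C; ring).
  rewrite E. apply lim0_ext with (fun h => RtoC (1 - (x + h) ^ 2) * (u (x + h) * Cconj (u (x + h))))%C.
  { intros h _. rewrite E. reflexivity. }
  assert (Cu := deriv_within_continuous _ _ _ _ x Hu Hx).
  apply lim0_mult; [apply (lim0_continuity_pt (-1) 1 (fun t => 1 - t ^ 2)); reg|].
  apply lim0_mult; [exact Cu | exact (lim0_Cconj _ _ _ Cu)].
Qed.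

Lemma wnorm_derive t : -1 < t < 1 -> is_derive wnorm t (wnorm' t).
Proof.
  intros Ht. destruct (deriv_within_components _ _ _ _ t Hu Ht) as [Hp Hq].
  assert (D := is_derive_Rmult _ _ _ _ _
    (is_derive_minus _ _ _ _ _ (is_derive_const 1 t) (is_derive_pow _ 2 _ _ (is_derive_id t)))
    (is_derive_plus _ _ _ _ _ (is_derive_pow _ 2 _ _ Hp) (is_derive_pow _ 2 _ _ Hq))).
  unfold wnorm. eapply is_derive_eq; [exact D|]. unfold wnorm', minus, plus, opp, zero, one. simpl. ring.
Qed.

Lemma wnorm'_derive t : -1 < t < 1 -> is_derive wnorm' t (wnorm'' t).
Proof.
  intros Ht. destruct (deriv_within_components _ _ _ _ t Hu Ht) as [Hp Hq].
  destruct (deriv_within_components _ _ _ _ t Hu1 Ht) as [Hp1 Hq1].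
  assert (DW := is_derive_minus _ _ _ _ _ (is_derive_const 1 t) (is_derive_pow _ 2 _ _ (is_derive_id t))).
  assert (DF := is_derive_plus _ _ _ _ _ (is_derive_pow _ 2 _ _ Hp) (is_derive_pow _ 2 _ _ Hq)).
  assert (Da := is_derive_Rmult _ _ _ _ _ (is_derive_const 2 t)
    (is_derive_plus _ _ _ _ _ (is_derive_Rmult _ _ _ _ _ Hp Hp1) (is_derive_Rmult _ _ _ _ _ Hq Hq1))).
  assert (D := is_derive_plus _ _ _ _ _
    (is_derive_Rmult _ _ _ _ _ (is_derive_Rmult _ _ _ _ _ (is_derive_const (-2) t) (is_derive_id t)) DF)
    (is_derive_Rmult _ _ _ _ _ DW Da)).
  unfold wnorm'. eapply is_derive_eq; [exact D|].
  unfold wnorm'', minus, plus, opp, zero, one. simpl. ring.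
Qed.

Lemma wnorm'_max_zero M : -1 < M < 1 -> (forall t, -1 <= t <= 1 -> wnorm t <= wnorm M) ->
  wnorm' M = 0.
Proof.
  intros HM Hmax.
  assert (pr : derivable_pt wnorm M) by (exists (wnorm' M); apply is_derive_Reals, wnorm_derive; auto).
  rewrite <- (deriv_maximum wnorm (-1) 1 M pr (proj1 HM) (proj2 HM)).
  - unfold derive_pt. destruct pr as [l Hl]. simpl.
    apply (uniqueness_limite wnorm M); auto. apply is_derive_Reals, wnorm_derive; auto.
  - intros x Hx1 Hx2. apply Hmax. lra.
Qed.

Lemma wnorm''_pos s m b t : -1 < t < 1 -> 2 <= m -> 0 < 2*m - 3 - b^2 - 2*Rabs s ->
  ode_lhs s (m, b) (u t) (u1 t) (u2 t) t = RtoC 0 -> wnorm' t = 0 ->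
  0 < fst (u t) ^ 2 + snd (u t) ^ 2 -> 0 < wnorm'' t.
Proof.
  intros Ht Hm Hk E Hcrit HF.
  assert (ERe := f_equal fst E). assert (EIm := f_equal snd E).
  unfold ode_lhs, Cminus, Cplus, Cmult, Copp, RtoC in ERe, EIm. simpl in ERe, EIm.
  unfold wnorm''. apply critical_weighted_norm_convex with (m := m) (b := b) (s := s);
    [ exact Ht | exact Hm | exact Hk | rewrite <- ERe; ring | rewrite <- EIm; ring
    | rewrite <- Hcrit; unfold wnorm'; ring | exact HF ].
Qed.

Lemma ode_max_principle s mu : 2 <= Re mu -> 0 < 2 * Re mu - 3 - Im mu ^ 2 - 2 * Rabs s ->
  (forall y, -1 <= y <= 1 -> ode_lhs s mu (u y) (u1 y) (u2 y) y = RtoC 0) ->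
  forall y, -1 <= y <= 1 -> u y = RtoC 0.
Proof.
  intros Hm Hk Hode. apply (deriv_within_vanish_closed _ _ _ u1); [lra | exact Hu |].
  intros y Hy. destruct (Req_dec (fst (u y) ^ 2 + snd (u y) ^ 2) 0) as [Z|NZ].
  { apply C_eq_components; simpl; nra. }
  exfalso.
  assert (HGy : 0 < wnorm y).
  { unfold wnorm. generalize (pow2_ge_0 (fst (u y))) (pow2_ge_0 (snd (u y))). intros.
    apply Rmult_lt_0_compat; nra. }
  destruct (continuous_within_attains_max (-1) 1 wnorm ltac:(lra) wnorm_continuous) as [M [HMin Hmax]].
  assert (HM : -1 < M < 1).
  { assert (wnorm 1 = 0 /\ wnorm (-1) = 0) as [G1 Gm1] by (unfold wnorm; split; ring).
    assert (wnorm y <= wnorm M) by (apply Hmax; lra).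
    destruct HMin as [A1 A2]. split.
    - destruct (Rle_lt_or_eq_dec _ _ A1) as [B|B]; [exact B | rewrite <- B in H; lra].
    - destruct (Rle_lt_or_eq_dec _ _ A2) as [B|B]; [exact B | rewrite B in H; lra]. }
  assert (Hcrit := wnorm'_max_zero M HM Hmax).
  assert (HFM : 0 < fst (u M) ^ 2 + snd (u M) ^ 2).
  { assert (0 < wnorm M) by (apply Rlt_le_trans with (wnorm y); auto; apply Hmax; lra).
    unfold wnorm in *. generalize (pow2_ge_0 (fst (u M))) (pow2_ge_0 (snd (u M))). nra. }
  destruct mu as [m b].
  assert (H2 := wnorm''_pos s m b M HM Hm Hk (Hode M ltac:(lra)) Hcrit HFM).
  destruct (exists_gt_right_of_pos_second_deriv wnorm wnorm' (-1) 1 M (wnorm'' M) HM wnorm_derive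
              Hcrit (wnorm'_derive M HM) H2) as [t [Ht Hlt]].
  assert (wnorm t <= wnorm M) by (apply Hmax; lra). lra.
Qed.

End MaximumPrinciple.

(** * The equation on [[-1, 1]] *)

Definition shift (lam : C) (n : nat) : C := (lam + INR n)%C.

Lemma ode_lhs_derive s lam (D : nat -> R -> C) n : deriv_tower (-1) 1 D ->
  deriv_within (-1) 1 (fun y => ode_lhs s (shift lam n) (D n y) (D (S n) y) (D (S (S n)) y) y)
    (fun y => ode_lhs s (shift lam (S n)) (D (S n) y) (D (S (S n)) y) (D (S (S (S n))) y) y).
Proof.
  intros HD. set (m := shift lam n).
  assert (Hlin : deriv_within (-1) 1 (fun y => 2 * (m * y) + RtoC (2 * s))%C (fun _ => 2 * m)%C).
  { eapply deriv_within_ext; [| | apply deriv_within_plus;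
      [apply deriv_within_scal, deriv_within_scal, deriv_within_id | apply deriv_within_const]];
    intros; simpl; [reflexivity | ring]. }
  assert (Hquad : deriv_within (-1) 1 (fun y => RtoC (y ^ 2 - 1)) (fun y => RtoC (2 * y))).
  { apply deriv_within_RtoC. intros x _. auto_derive; auto. ring. }
  assert (T := deriv_within_plus _ _ _ _ _ _
    (deriv_within_plus _ _ _ _ _ _ (deriv_within_scal _ _ (m * m - m)%C _ _ (HD n))
                                   (deriv_within_mult _ _ _ _ _ _ Hlin (HD (S n))))
    (deriv_within_mult _ _ _ _ _ _ Hquad (HD (S (S n))))).
  eapply deriv_within_ext; [| | exact T]; intros x _; unfold ode_lhs; [reflexivity|].
  unfold m, shift. rewrite S_INR. apply C_eq_components; unfold_C; ring.
Qed.

Lemma ode_tower s lam (D : nat -> R -> C) : deriv_tower (-1) 1 D ->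
  (forall y, -1 <= y <= 1 -> ode_lhs s lam (D 0%nat y) (D 1%nat y) (D 2%nat y) y = RtoC 0) ->
  forall n y, -1 <= y <= 1 -> ode_lhs s (shift lam n) (D n y) (D (S n) y) (D (S (S n)) y) y = RtoC 0.
Proof.
  intros HD H0 n. induction n as [|n IH].
  - replace (shift lam 0) with lam by (apply C_eq_components; unfold shift; unfold_C; ring).
    exact H0.
  - exact (deriv_within_zero (-1) 1 _ _ ltac:(lra) (ode_lhs_derive s lam D n HD) IH).
Qed.

Lemma shift_quadratic_neq0 lam j : -1 < Re lam -> lam <> RtoC 0 -> lam <> RtoC 1 ->
  (shift lam j * shift lam j - shift lam j)%C <> RtoC 0.
Proof.
  intros Hre H0 H1.
  replace (shift lam j * shift lam j - shift lam j)%C with (shift lam j * (shift lam j - 1))%C by ring.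
  apply Cmult_neq_0; intro E; unfold shift in E; destruct lam as [l1 l2]; injection E; intros E2 E1; simpl in Hre.
  - destruct j as [|j]; [| rewrite S_INR in E1; generalize (pos_INR j); lra].
    apply H0. apply C_eq_components; simpl in *; lra.
  - destruct j as [|[|j]].
    + apply H1. apply C_eq_components; simpl in *; lra.
    + apply H0. apply C_eq_components; simpl in *; lra.
    + rewrite !S_INR in E1. generalize (pos_INR j); lra.
Qed.

Lemma ode_no_smooth_solution s lam (D : nat -> R -> C) :
  -1 < Re lam -> lam <> RtoC 0 -> lam <> RtoC 1 -> deriv_tower (-1) 1 D ->
  (forall y, -1 <= y <= 1 -> ode_lhs s lam (D 0%nat y) (D 1%nat y) (D 2%nat y) y = RtoC 0) ->
  forall y, -1 <= y <= 1 -> D 0%nat y = RtoC 0.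
Proof.
  intros Hre H0 H1 HD Hode.
  assert (HE := ode_tower s lam D HD Hode).
  destruct (INR_unbounded (5 + Im lam ^ 2 + 2 * Rabs s + Rabs (Re lam))) as [N HN].
  assert (Hhigh : forall n, (N <= n)%nat -> forall y, -1 <= y <= 1 -> D n y = RtoC 0).
  { intros n Hn. apply le_INR in Hn.
    apply (ode_max_principle (D n) (D (S n)) (D (S (S n))) (HD n) (HD (S n)) s (shift lam n));
      [| | apply HE]; unfold shift; simpl; rewrite ?Rplus_0_r;
      generalize (Rle_abs (Re lam)) (Rle_abs (- Re lam)) (pow2_ge_0 (Im lam)) (Rabs_pos s);
      rewrite Rabs_Ropp; unfold Re, Im in *; lra. }
  assert (Hdesc : forall k j, (N <= j + k)%nat -> forall y, -1 <= y <= 1 -> D j y = RtoC 0).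
  { induction k as [|k IH]; intros j Hjk y Hy.
    - apply Hhigh; [lia | exact Hy].
    - assert (E := HE j y Hy). unfold ode_lhs in E.
      rewrite (IH (S j)), (IH (S (S j))) in E by (auto; lia).
      apply (Cmult_eq0_r _ _ (shift_quadratic_neq0 lam j Hre H0 H1)).
      rewrite <- E. ring. }
  intros y Hy. apply (Hdesc N 0%nat); auto; lia.
Qed.

(** * The hypergeometric form on [[0, 1]] *)

Definition hypergeometric_lhs (s : R) (lam : C) (P0 P1 P2 : C) (z : R) : C :=
  (RtoC (z * (1 - z))%R * P2 + (lam - RtoC s - 2 * (lam * z)) * P1 - lam * (lam - 1) * P0)%C.

Lemma rescale_tower (D : nat -> R -> C) : deriv_tower 0 1 D ->
  deriv_tower (-1) 1 (fun n y => RtoC ((/2) ^ n) * D n ((y + 1) / 2)%R)%C.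
Proof.
  intros HD n.
  assert (Hc : deriv_within (-1) 1 (fun y => D n ((y + 1) / 2)) (fun y => D (S n) ((y + 1) / 2)%R * RtoC (/ 2))%C).
  { apply (deriv_within_comp (-1) 1 0 1 (D n) (D (S n)) (fun y => (y + 1) / 2) (fun _ => / 2));
      [apply HD | | | ]; intros; [auto_derive; auto; field | lra | lra]. }
  eapply deriv_within_ext; [| | exact (deriv_within_scal _ _ (RtoC ((/2) ^ n)) _ _ Hc)];
    intros x _; [reflexivity|]. simpl pow. apply C_eq_components; unfold_C; ring.
Qed.

Lemma ode_lhs_rescale s lam P0 P1 P2 z :
  ode_lhs s lam (RtoC ((/2) ^ 0) * P0)%C (RtoC ((/2) ^ 1) * P1)%C (RtoC ((/2) ^ 2) * P2)%C (2 * z - 1)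
  = (- hypergeometric_lhs s lam P0 P1 P2 z)%C.
Proof.
  unfold ode_lhs, hypergeometric_lhs. apply C_eq_components; unfold_C; field.
Qed.

Lemma hypergeometric_no_smooth_solution s lam (psi : R -> C) (D : nat -> R -> C) :
  -1 < Re lam -> lam <> RtoC 0 -> lam <> RtoC 1 -> smooth_on_with 0 1 psi D ->
  (forall z, 0 <= z <= 1 -> hypergeometric_lhs s lam (D 0%nat z) (D 1%nat z) (D 2%nat z) z = RtoC 0) ->
  forall z, 0 <= z <= 1 -> psi z = RtoC 0.
Proof.
  intros Hre H0 H1 [HD0 HD] Heq z Hz. rewrite <- HD0 by exact Hz.
  assert (Hsol := ode_no_smooth_solution s lam _ Hre H0 H1 (rescale_tower D HD)).
  replace (D 0%nat z) with (RtoC ((/2) ^ 0) * D 0%nat ((2 * z - 1 + 1) / 2)%R)%C.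
  - apply Hsol; [|lra]. intros y Hy. cbv beta.
    set (w := (y + 1) / 2). replace y with (2 * w - 1) by (unfold w; field).
    rewrite ode_lhs_rescale, Heq by (unfold w; lra). apply C_eq_components; simpl; ring.
  - replace ((2 * z - 1 + 1) / 2) with z by field. apply C_eq_components; simpl; ring.
Qed.

(** * The transformed equation *)

Definition cpow (x : R) (z : C) : C :=
  (exp (Re z * ln x) * cos (Im z * ln x), exp (Re z * ln x) * sin (Im z * ln x)).

Lemma cpow_pred x z : 0 < x -> cpow x (z - 1)%C = (cpow x z * RtoC (/ x))%C.
Proof.
  intros Hx. unfold cpow.
  assert (E : exp ((Re z - 1) * ln x) = exp (Re z * ln x) * / x).
  { replace ((Re z - 1) * ln x) with (Re z * ln x + - ln x) by ring.
    rewrite exp_plus, exp_Ropp, exp_ln by exact Hx. reflexivity. }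
  destruct z as [z1 z2]. unfold Re, Im in *. simpl in *.
  apply C_eq_components; unfold_C;
    replace (z1 + - (1)) with (z1 - 1) by ring; replace (z2 + - 0) with z2 by ring; rewrite E; ring.
Qed.

Lemma cpow_neq0 x z : cpow x z <> RtoC 0.
Proof.
  unfold cpow. intro E. injection E; intros E2 E1.
  apply Rmult_integral in E1 as [E1|E1]; [generalize (exp_pos (Re z * ln x)); lra|].
  apply Rmult_integral in E2 as [E2|E2]; [generalize (exp_pos (Re z * ln x)); lra|].
  generalize (sin2_cos2 (Im z * ln x)). unfold Rsqr. rewrite E1, E2. lra.
Qed.

Section Transform.
Variables (s : R) (lam : C).
Hypothesis Hs : 1 < s.

Definition weight (j : nat) (Y : R) : C := cpow (s - Y) (- shift lam j)%C.

Lemma weight_succ j Y : Y < s -> weight (S j) Y = (weight j Y * RtoC (/ (s - Y)))%C.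
Proof.
  intros HY. unfold weight. rewrite <- cpow_pred by lra. f_equal.
  unfold shift. rewrite S_INR. apply C_eq_components; unfold_C; ring.
Qed.

Lemma weight_derive j : deriv_within (-1) 1 (weight j) (fun Y => shift lam j * weight (S j) Y)%C.
Proof.
  apply deriv_within_of_components. intros Y HY.
  rewrite weight_succ by lra. unfold weight, cpow.
  destruct (- shift lam j)%C as [z1 z2] eqn:E. unfold Re, Im. simpl fst; simpl snd.
  split; auto_derive; try (repeat split; lra); change (s + - Y) with (s - Y);
    unfold shift; unfold_C; injection E as E1 E2; subst z1 z2; field; lra.
Qed.

Definition mobius (Y : R) : R := (s * Y - 1) / (s - Y).

Lemma mobius_derive Y : Y < s -> is_derive mobius Y ((s * s - 1) / ((s - Y) * (s - Y))).
Proof. intros. unfold mobius. auto_derive; [lra|]. field. lra. Qed.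

Lemma mobius_range Y : -1 <= Y <= 1 -> -1 <= mobius Y <= 1.
Proof.
  intros HY. unfold mobius. assert (0 < s - Y) by lra.
  split; apply (Rmult_le_reg_r (s - Y)); auto; unfold Rdiv;
    rewrite Rmult_assoc, Rinv_l by lra; nra.
Qed.

Lemma mobius_inj x y : -1 <= x <= 1 -> -1 <= y <= 1 -> mobius x = mobius y -> x = y.
Proof.
  intros Hx Hy E. unfold mobius in E.
  assert (E2 : (s * x - 1) * (s - y) = (s * y - 1) * (s - x)).
  { replace (s * x - 1) with ((s * x - 1) / (s - x) * (s - x)) by (field; lra).
    replace (s * y - 1) with ((s * y - 1) / (s - y) * (s - y)) by (field; lra). rewrite E. ring. }
  assert (Ez : (s * s - 1) * (x - y) = 0) by nra.
  apply Rmult_integral in Ez as [Ez|Ez]; nra.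
Qed.

Lemma mobius_inverse y : -1 <= y <= 1 ->
  -1 <= (1 + s * y) / (s + y) <= 1 /\ mobius ((1 + s * y) / (s + y)) = y.
Proof.
  intros Hy. assert (0 < s + y) by lra. split.
  - split; apply (Rmult_le_reg_r (s + y)); auto; unfold Rdiv;
      rewrite Rmult_assoc, Rinv_l by lra; nra.
  - unfold mobius. field. split; [lra | nra].
Qed.

(* A term [(c, j, k)] stands for [Y |-> c * weight j Y * D k (mobius Y)]; the
   derivatives of [weight 0 * (D 0 \o mobius)] are finite sums of such terms. *)
Definition term := (C * nat * nat)%type.

Fixpoint eval_terms (D : nat -> R -> C) (l : list term) (Y : R) : C :=
  match l with
  | [] => RtoC 0
  | (c, j, k) :: l' => (c * (weight j Y * D k (mobius Y)) + eval_terms D l' Y)%C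
  end.

Fixpoint deriv_terms (l : list term) : list term :=
  match l with
  | [] => []
  | (c, j, k) :: l' =>
      (c * shift lam j, S j, k)%C :: (c * RtoC (s * s - 1), S (S j), S k)%C :: deriv_terms l'
  end.

Definition transform_tower (D : nat -> R -> C) (n : nat) : R -> C :=
  eval_terms D (Nat.iter n deriv_terms [(RtoC 1, 0%nat, 0%nat)]).

Lemma term_derive (D : nat -> R -> C) c j k : deriv_tower (-1) 1 D ->
  deriv_within (-1) 1 (eval_terms D [(c, j, k)]) (eval_terms D (deriv_terms [(c, j, k)])).
Proof.
  intros HD.
  assert (Hc := deriv_within_comp (-1) 1 (-1) 1 (D k) (D (S k)) mobius
    (fun Y => (s * s - 1) / ((s - Y) * (s - Y))) (HD k)
    (fun x _ => mobius_derive x ltac:(lra)) mobius_range mobius_inj).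
  assert (T := deriv_within_plus _ _ _ _ _ _
    (deriv_within_scal _ _ c _ _ (deriv_within_mult _ _ _ _ _ _ (weight_derive j) Hc))
    (deriv_within_const (-1) 1 (RtoC 0))).
  eapply deriv_within_ext; [| | exact T]; intros x Hx; [reflexivity|]. simpl.
  rewrite !weight_succ by lra. apply C_eq_components; unfold_C; field; lra.
Qed.

Lemma eval_terms_derive (D : nat -> R -> C) l : deriv_tower (-1) 1 D ->
  deriv_within (-1) 1 (eval_terms D l) (eval_terms D (deriv_terms l)).
Proof.
  intros HD. induction l as [|[[c j] k] l IH].
  - apply deriv_within_const.
  - assert (T := deriv_within_plus _ _ _ _ _ _ (term_derive D c j k HD) IH).
    eapply deriv_within_ext; [| | exact T]; intros; simpl; ring.
Qed.

Lemma transform_tower_deriv (D : nat -> R -> C) : deriv_tower (-1) 1 D ->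
  deriv_tower (-1) 1 (transform_tower D).
Proof. intros HD n. apply eval_terms_derive, HD. Qed.

Definition singular_ode_lhs (alpha : R) (P0 P1 P2 : C) (y : R) : C :=
  ((lam * lam + lam) * P0 + ((2 * lam + 2) * y + RtoC (2 * alpha / (s + y))) * P1
   + RtoC (y ^ 2 - 1) * P2)%C.

(* [transform_tower D 0 = weight 0 * (D 0 \o mobius)] is [(s - Y)^(-lam) phi (mobius Y)]. *)
Lemma transform_ode (D : nat -> R -> C) Y : -1 <= Y <= 1 ->
  ode_lhs s lam (transform_tower D 0 Y) (transform_tower D 1 Y) (transform_tower D 2 Y) Y
  = (weight 0 Y * RtoC ((s * s - 1) / (s - Y) ^ 2)
     * singular_ode_lhs (s * s - 1) (D 0%nat (mobius Y)) (D 1%nat (mobius Y)) (D 2%nat (mobius Y))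
         (mobius Y))%C.
Proof.
  intros HY. unfold ode_lhs, singular_ode_lhs, transform_tower. simpl.
  rewrite !(weight_succ _ Y) by lra.
  generalize (weight 0 Y) (D 0%nat (mobius Y)) (D 1%nat (mobius Y)) (D 2%nat (mobius Y)).
  intros E0 P0 P1 P2.
  assert (Hq : 2 * (s * s - 1) / (s + mobius Y) = 2 * (s - Y)).
  { unfold mobius. field. split; nra. }
  rewrite Hq. unfold mobius, shift. simpl INR.
  repeat first [ rewrite RtoC_minus | rewrite RtoC_mult | rewrite RtoC_plus | rewrite RtoC_pow
               | rewrite RtoC_inv by lra
               | rewrite RtoC_div by (repeat apply Rmult_integral_contrapositive_currified; lra) ].
  field. intro E. apply (f_equal fst) in E. simpl in E. lra.
Qed.

Lemma singular_ode_no_smooth_solution (D : nat -> R -> C) :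
  -1 < Re lam -> lam <> RtoC 0 -> lam <> RtoC 1 -> deriv_tower (-1) 1 D ->
  (forall y, -1 <= y <= 1 -> singular_ode_lhs (s * s - 1) (D 0%nat y) (D 1%nat y) (D 2%nat y) y = RtoC 0) ->
  forall y, -1 <= y <= 1 -> D 0%nat y = RtoC 0.
Proof.
  intros Hre H0 H1 HD Heq y Hy.
  assert (Hsol := ode_no_smooth_solution s lam (transform_tower D) Hre H0 H1 (transform_tower_deriv D HD)).
  destruct (mobius_inverse y Hy) as [HY Hmob].
  assert (Hz := Hsol (fun Y HY => ltac:(rewrite transform_ode, Heq by (auto using mobius_range); ring)) _ HY).
  unfold transform_tower in Hz. simpl in Hz. rewrite Hmob in Hz.
  apply (Cmult_eq0_r (weight 0 ((1 + s * y) / (s + y)))); [apply cpow_neq0|].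
  rewrite <- Hz. ring.
Qed.

End Transform.

Theorem mainTheorem5 (alpha : R) (lam : C) :
  0 < alpha -> -1 < Re lam -> lam <> RtoC 0 -> lam <> RtoC 1 ->
  (* hypergeometric form on [0,1] *)
  (forall (psi : R -> C) (D : nat -> R -> C),
     smooth_on_with 0 1 psi D ->
     (forall z, 0 <= z <= 1 ->
        Cminus
          (Cplus (Cmult (RtoC (z * (1 - z))) (D 2%nat z))
                 (Cmult (Cminus (Cminus lam (RtoC (sqrt (1 + alpha))))
                                (Cmult (RtoC 2) (Cmult lam (RtoC z))))
                        (D 1%nat z)))
          (Cmult (Cmult lam (Cminus lam (RtoC 1))) (D 0%nat z)) = RtoC 0) ->
     forall z, 0 <= z <= 1 -> psi z = RtoC 0) /\
  (* equivalent form on [-1,1] *)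
  (forall (psi : R -> C) (D : nat -> R -> C),
     smooth_on_with (-1) 1 psi D ->
     (forall y, -1 <= y <= 1 ->
        Cplus
          (Cplus (Cmult (Cminus (Cmult lam lam) lam) (D 0%nat y))
                 (Cmult (Cplus (Cmult (RtoC 2) (Cmult lam (RtoC y)))
                               (RtoC (2 * sqrt (1 + alpha))))
                        (D 1%nat y)))
          (Cmult (RtoC (y ^ 2 - 1)) (D 2%nat y)) = RtoC 0) ->
     forall y, -1 <= y <= 1 -> psi y = RtoC 0) /\
  (* consequence *)
  (forall (phi : R -> C) (D : nat -> R -> C),
     smooth_on_with (-1) 1 phi D ->
     (forall y, -1 <= y <= 1 ->
        Cplus
          (Cplus (Cmult (Cplus (Cmult lam lam) lam) (D 0%nat y))
                 (Cmult (Cplus (Cmult (Cplus (Cmult (RtoC 2) lam) (RtoC 2)) (RtoC y))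
                               (RtoC (2 * alpha / (sqrt (1 + alpha) + y))))
                        (D 1%nat y)))
          (Cmult (RtoC (y ^ 2 - 1)) (D 2%nat y)) = RtoC 0) ->
     forall y, -1 <= y <= 1 -> phi y = RtoC 0).
Proof.
  intros Halpha Hre H0 H1.
  set (s := sqrt (1 + alpha)).
  assert (Hs : 1 < s).
  { unfold s. rewrite <- sqrt_1 at 1. apply sqrt_lt_1_alt. lra. }
  assert (Halpha_s : alpha = s * s - 1) by (unfold s; rewrite sqrt_sqrt by lra; ring).
  split; [|split].
  - intros psi D. exact (hypergeometric_no_smooth_solution s lam psi D Hre H0 H1).
  - intros psi D [HD0 HD] Heq y Hy. rewrite <- HD0 by exact Hy.
    exact (ode_no_smooth_solution s lam D Hre H0 H1 HD Heq y Hy).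
  - intros phi D [HD0 HD] Heq y Hy. rewrite <- HD0 by exact Hy.
    rewrite Halpha_s in Heq.
    exact (singular_ode_no_smooth_solution s lam Hs D Hre H0 H1 HD Heq y Hy).
Qed.
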